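(* For any real $x>1/4$ we have $$\sum_{k=0}^\infty\frac{2(4x+1)k-2x+1}{x^{2k}\binom{4k}{2k}}=\frac{8x^2}{(4x-1)^2}\left(\frac3{\sqrt{4x-1}}\operatorname{arccot}\sqrt{4x-1}-4x+4\right)$$ and $$\sum_{k=0}^\infty\frac{2(4x-1)k-2x-1}{x^{2k}\binom{4k}{2k}}=\frac{8x^2}{(4x+1)^2}\left(\frac{3R(4x+1)}{4x+1}-4x-4\right).$$ Consequently, \begin{align*} \sum_{k=0}^\infty\frac{10k-1}{\binom{4k}{2k}}&=\frac{4\sqrt3}{27}\pi,\\ \sum_{k=0}^\infty\frac{k4^k}{\binom{4k}{2k}}&=\frac{3\pi+8}{12},\\ \sum_{k=0}^\infty\frac{(14k+1)9^k}{\binom{4k}{2k}}&=24\pi\sqrt3+64,\\ \sum_{k=0}^\infty\frac{(22k-1)9^k}{4^k\binom{4k}{2k}}&=\frac{32}{25}\left(4+\frac{27}{\sqrt{15}}\arctan\sqrt{\frac35}\right),\\ \sum_{k=0}^\infty\frac{14k-5}{4^k\binom{4k}{2k}}&=\frac{16}{81}(\log2-24). \end{align*}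
   Context: For real $x$ with $x>1$ or $x<0$, define $R(x)=\sqrt x\,\operatorname{arctanh}\frac1{\sqrt x}$, i.e. $R(x)=\frac{\sqrt x}2\log\frac{\sqrt x+1}{\sqrt x-1}$ if $x>1$ and $R(x)=\sqrt{|x|}\arctan\frac1{\sqrt{|x|}}$ if $x<0$. For $y>0$, $\operatorname{arccot} y=\arctan(1/y)\in(0,\pi/2)$. *)

From Stdlib Require Import Reals.
From Coquelicot Require Import Coquelicot.
Open Scope R_scope.

Definition binomR (n k : nat) : R := Binomial.C n k.

Definition arccot (y : R) : R := atan (1 / y).

(* R(x) = sqrt x * arctanh (1/sqrt x), for x > 1 or x < 0
   (value for 0 <= x <= 1 is irrelevant / arbitrary) *)
Definition Rfun (x : R) : R :=
  if Rlt_dec 1 x then sqrt x / 2 * ln ((sqrt x + 1) / (sqrt x - 1))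
  else sqrt (- x) * atan (1 / sqrt (- x)).

From Stdlib Require Import Reals Lra Lia.
From Coquelicot Require Import Coquelicot.
Open Scope R_scope.

(* By the Wallis integral, [1 / ((4k+1) C(4k,2k)) = 16^-k ∫_0^1 (1 - u^2)^(2k) du], so with
   [s = (1 - u^2) / (4x)] the series [sum (a k + b) / (x^(2k) C(4k,2k))] is
   [∫_0^1 sum_k (a k + b) (4k + 1) s^(2k) du]; term-wise integration is legitimate because
   [0 <= s <= 1/(4x) < 1].  The inner sum is a rational function of [s] whose partial fractions
   are powers of [1 / (1 - s) = 4x / (4x - 1 + u^2)] and [1 / (1 + s) = 4x / (4x + 1 - u^2)].
   Their integrals reduce to [∫_0^1 du / (4x - 1 + u^2)], an arctangent, and
   [∫_0^1 du / (4x + 1 - u^2)], a logarithm.  The two families are the choices of [(a, b)]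
   killing one of these two transcendental parts; the numerical series are their values at
   [x = 1, 1/2, 1/3, 2/3] and [x = 2]. *)

(* Holds also for [k > n], where [Binomial.C n k] is the junk value [n! / k!]. *)
Lemma C_gt0 (n k : nat) : 0 < Binomial.C n k.
Proof.
  unfold Binomial.C. apply Rdiv_lt_0_compat; [| apply Rmult_lt_0_compat]; apply INR_fact_lt_0.
Qed.

Lemma C_central_succ (n : nat) :
  INR (S n) * Binomial.C (2 * S n) (S n) = 2 * (2 * INR n + 1) * Binomial.C (2 * n) n.
Proof.
  unfold Binomial.C.
  replace (2 * S n - S n)%nat with (S n) by lia.
  replace (2 * n - n)%nat with n by lia.
  replace (2 * S n)%nat with (S (S (2 * n))) by lia.
  rewrite !fact_simpl, !mult_INR, !S_INR, mult_INR.
  assert (Hn := INR_fact_neq_0 n). assert (0 <= INR n) by apply pos_INR.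
  simpl (INR 2). field. lra.
Qed.

Definition wallis (n : nat) : R := 4 ^ n / ((2 * INR n + 1) * Binomial.C (2 * n) n).

Lemma wallis_S (n : nat) : wallis (S n) = (2 * INR n + 2) / (2 * INR n + 3) * wallis n.
Proof.
  unfold wallis.
  assert (Hrec := C_central_succ n). rewrite S_INR in *.
  assert (H0 := C_gt0 (2 * n) n). assert (H1 := C_gt0 (2 * S n) (S n)).
  assert (0 <= INR n) by apply pos_INR.
  replace (Binomial.C (2 * S n) (S n))
    with (2 * (2 * INR n + 1) * Binomial.C (2 * n) n / (INR n + 1)) by (rewrite <- Hrec; field; lra).
  simpl pow. field. repeat split; lra.
Qed.

(* Integrating [d/du (u (1 - u^2)^(n+1)) = (2n+3) (1-u^2)^(n+1) - (2n+2) (1-u^2)^n] over [0, 1]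
   gives the Wallis recurrence. *)
Lemma is_RInt_wallis (n : nat) : is_RInt (fun u => (1 - u ^ 2) ^ n) 0 1 (wallis n).
Proof.
  induction n as [|n IH].
  - replace (wallis 0) with (scal (1 - 0) 1)
      by (unfold wallis, Binomial.C, scal; simpl; unfold mult; simpl; field).
    apply (is_RInt_const (V := R_NormedModule)).
  - assert (Hn : 0 <= INR n) by apply pos_INR.
    assert (Hparts : is_RInt
      (fun u => (2 * INR n + 3) * (1 - u ^ 2) ^ S n - (2 * INR n + 2) * (1 - u ^ 2) ^ n) 0 1
      (1 * (1 - 1 ^ 2) ^ S n - 0 * (1 - 0 ^ 2) ^ S n)).
    { apply (is_RInt_derive (fun u => u * (1 - u ^ 2) ^ S n)); intros u _.
      - auto_derive; [easy|].
        replace (match n with 0%nat => 1 | S _ => INR n + 1 end) with (INR n + 1)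
          by (destruct n; simpl; ring).
        simpl pow. unfold Rminus. ring.
      - apply (ex_derive_continuous (K := R_AbsRing) (V := R_NormedModule)). auto_derive. easy. }
    replace (1 * (1 - 1 ^ 2) ^ S n - 0 * (1 - 0 ^ 2) ^ S n) with 0 in Hparts by (simpl; ring).
    apply (is_RInt_ext (V := R_NormedModule)
      (fun u => / (2 * INR n + 3) * (((2 * INR n + 3) * (1 - u ^ 2) ^ S n
                 - (2 * INR n + 2) * (1 - u ^ 2) ^ n) + (2 * INR n + 2) * (1 - u ^ 2) ^ n)));
      [intros u _; cbn -[pow INR]; field; lra |].
    replace (wallis (S n)) with (/ (2 * INR n + 3) * (0 + (2 * INR n + 2) * wallis n))
      by (rewrite wallis_S; field; lra).
    apply (is_RInt_scal (V := R_NormedModule)), (is_RInt_plus (V := R_NormedModule)); [exact Hparts|].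
    apply (is_RInt_scal (V := R_NormedModule)). exact IH.
Qed.

Lemma ex_series_sqr_geom_dom (g : nat -> R) (v : R) : Rabs v < 1 ->
  (forall n, Rabs (g n) <= (INR n + 1) ^ 2 * Rabs v ^ n) -> ex_series g.
Proof.
  intros Hv Hg. set (r := (1 + Rabs v) / 2).
  assert (Hr : 0 < r < 1) by (assert (H := Rabs_pos v); unfold r; lra).
  apply (ex_series_le (V := R_CompleteNormedModule) g (fun n => Rabs ((INR n + 1) ^ 2 * r ^ n))).
  { intros n. eapply Rle_trans; [apply Hg|]. rewrite (Rabs_right ((INR n + 1) ^ 2 * r ^ n)).
    - apply Rmult_le_compat_l; [apply pow_le; assert (H := pos_INR n); lra|].
      apply pow_incr. split; [apply Rabs_pos | unfold r; lra].
    - apply Rle_ge, Rmult_le_pos; apply pow_le; [assert (H := pos_INR n)|]; lra. }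
  apply (ex_series_DAlembert _ r); [lra| |].
  - intros n. apply Rgt_not_eq, Rmult_lt_0_compat; [| apply pow_lt; lra].
    assert (H := pos_INR n). nra.
  - assert (Hinv : is_lim_seq (fun n => / (INR n + 1)) 0).
    { replace (Finite 0) with (Rbar_inv p_infty) by reflexivity.
      apply is_lim_seq_inv; [| discriminate].
      eapply is_lim_seq_ext; [intros n; apply S_INR |].
      apply (is_lim_seq_incr_1 INR), is_lim_seq_INR. }
    apply (is_lim_seq_ext (fun n => r * ((1 + / (INR n + 1)) * (1 + / (INR n + 1))))).
    + intros n. rewrite S_INR. assert (H := pos_INR n). assert (0 < r ^ n) by (apply pow_lt; lra).
      rewrite Rabs_right.
      * simpl pow. field. lra.
      * apply Rle_ge, Rlt_le, Rdiv_lt_0_compat; apply Rmult_lt_0_compat; try apply pow_lt; lra.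
    + replace (Finite r) with (Rbar_mult r ((1 + 0) * (1 + 0))) by (simpl; f_equal; ring).
      apply is_lim_seq_scal_l, is_lim_seq_mult';
        apply is_lim_seq_plus'; try apply is_lim_seq_const; exact Hinv.
Qed.

(* The shifted series [sum a_(n+1)] has the same sum [l] as [sum a_n], so [T = l - v l]. *)
Lemma is_series_of_shift_rec (a : nat -> R) (v T : R) :
  v <> 1 -> a 0%nat = 0 -> ex_series a ->
  is_series (fun n => a (S n) - v * a n) T -> is_series a (T / (1 - v)).
Proof.
  intros Hv Ha0 Hex HT.
  set (l := Series a). assert (Hl : is_series a l) by exact (Series_correct a Hex).
  assert (Hshift : is_series (fun n => a (S n)) l).
  { apply is_series_incr_1. rewrite Ha0. unfold plus; simpl. rewrite Rplus_0_r. exact Hl. }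
  assert (Hdiff : is_series (fun n => a (S n) - v * a n) (l - v * l)).
  { apply (is_series_minus (V := R_NormedModule)); [exact Hshift|].
    apply (is_series_scal_l (V := R_NormedModule)). exact Hl. }
  assert (E : T = l - v * l)
    by (rewrite <- (is_series_unique _ _ HT); exact (is_series_unique _ _ Hdiff)).
  replace (T / (1 - v)) with l; [exact Hl|].
  rewrite E. field. lra.
Qed.

Lemma is_series_INR_geom (v : R) : Rabs v < 1 ->
  is_series (fun n => INR n * v ^ n) (v / (1 - v) ^ 2).
Proof.
  intros Hv.
  assert (Hv1 : v <> 1) by (intros ->; rewrite Rabs_R1 in Hv; lra).
  replace (v / (1 - v) ^ 2) with ((v * / (1 - v)) / (1 - v)) by (field; lra).
  apply is_series_of_shift_rec; [exact Hv1 | simpl; ring | |].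
  - apply (ex_series_sqr_geom_dom _ v Hv). intros n.
    rewrite Rabs_mult, RPow_abs, Rabs_right by (apply Rle_ge, pos_INR).
    apply Rmult_le_compat_r; [apply Rabs_pos|]. assert (H := pos_INR n). nra.
  - apply (is_series_ext (fun n => v * v ^ n)); [intros n; rewrite S_INR; simpl; ring|].
    apply (is_series_scal_l (V := R_NormedModule)), is_series_geom, Hv.
Qed.

Lemma is_series_INR2_geom (v : R) : Rabs v < 1 ->
  is_series (fun n => INR n ^ 2 * v ^ n) (v * (1 + v) / (1 - v) ^ 3).
Proof.
  intros Hv.
  assert (Hv1 : v <> 1) by (intros ->; rewrite Rabs_R1 in Hv; lra).
  replace (v * (1 + v) / (1 - v) ^ 3)
    with ((2 * v * (v / (1 - v) ^ 2) + v * / (1 - v)) / (1 - v)) by (field; lra).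
  apply is_series_of_shift_rec; [exact Hv1 | simpl; ring | |].
  - apply (ex_series_sqr_geom_dom _ v Hv). intros n.
    rewrite Rabs_mult, RPow_abs, Rabs_right by (apply Rle_ge, pow_le, pos_INR).
    apply Rmult_le_compat_r; [apply Rabs_pos|]. assert (H := pos_INR n). simpl. nra.
  - apply (is_series_ext (fun n => 2 * v * (INR n * v ^ n) + v * v ^ n));
      [intros n; rewrite S_INR; simpl; ring|].
    apply (is_series_plus (V := R_NormedModule));
      apply (is_series_scal_l (V := R_NormedModule)).
    + apply is_series_INR_geom, Hv.
    + apply is_series_geom, Hv.
Qed.

Lemma is_RInt_sum_n (f : nat -> R -> R) (I : nat -> R) (a b : R) (N : nat) :
  (forall k, is_RInt (f k) a b (I k)) ->
  is_RInt (fun u => sum_n (fun k => f k u) N) a b (sum_n I N).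
Proof.
  intros HI. induction N as [|N IH].
  - rewrite sum_O. apply (is_RInt_ext (V := R_NormedModule) (f 0%nat));
      [intros u _; rewrite sum_O; reflexivity | apply HI].
  - rewrite sum_Sn.
    apply (is_RInt_ext (V := R_NormedModule)
             (fun u => plus (sum_n (fun k => f k u) N) (f (S N) u)));
      [intros u _; rewrite sum_Sn; reflexivity|].
    apply (is_RInt_plus (V := R_NormedModule)); [exact IH | apply HI].
Qed.

Lemma series_tail_abs_le (g M : nat -> R) (l : R) (N : nat) :
  (forall k, Rabs (g k) <= M k) -> ex_series M -> is_series g l ->
  Rabs (l - sum_n g N) <= Series M - sum_n M N.
Proof.
  intros HgM HM Hg.
  assert (Hg_ex : ex_series g) by (exists l; exact Hg).
  assert (HM_tail : ex_series (fun k => M (S N + k)%nat)) by (apply ex_series_incr_n, HM).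
  assert (Hg_tail : ex_series (fun k => Rabs (g (S N + k)%nat))).
  { apply (ex_series_le (V := R_CompleteNormedModule) _ (fun k => M (S N + k)%nat));
      [intros k | exact HM_tail].
    change (Rabs (Rabs (g (S N + k)%nat)) <= M (S N + k)%nat). rewrite Rabs_Rabsolu. apply HgM. }
  rewrite <- (is_series_unique _ _ Hg), (Series_incr_n g (S N)), (Series_incr_n M (S N))
    by (lia || assumption).
  rewrite !sum_n_Reals. simpl pred.
  replace (sum_f_R0 g N + Series (fun k => g (S N + k)%nat) - sum_f_R0 g N)
    with (Series (fun k => g (S N + k)%nat)) by ring.
  replace (sum_f_R0 M N + Series (fun k => M (S N + k)%nat) - sum_f_R0 M N)
    with (Series (fun k => M (S N + k)%nat)) by ring.
  eapply Rle_trans; [apply Series_Rabs, Hg_tail|].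
  apply Series_le; [|exact HM_tail]. intros k. split; [apply Rabs_pos | apply HgM].
Qed.

Lemma is_series_RInt_dominated (f : nat -> R -> R) (F : R -> R) (I M : nat -> R) (a b L : R) :
  a <= b ->
  (forall k, is_RInt (f k) a b (I k)) ->
  (forall k u, a <= u <= b -> Rabs (f k u) <= M k) -> ex_series M ->
  (forall u, a <= u <= b -> is_series (fun k => f k u) (F u)) ->
  is_RInt F a b L -> is_series I L.
Proof.
  intros Hab HI HM HM_ex HF HL.
  set (tail := fun N => (b - a) * (Series M - sum_n M N)).
  assert (Hbound : forall N, Rabs (L - sum_n I N) <= tail N).
  { intros N.
    apply (norm_RInt_le_const (V := R_NormedModule)
             (fun u => minus (F u) (sum_n (fun k => f k u) N))); [exact Hab | |].
    - intros u Hu. apply (series_tail_abs_le (fun k => f k u));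
        [intros k; apply HM, Hu | exact HM_ex | apply HF, Hu].
    - apply (is_RInt_minus (V := R_NormedModule)); [exact HL | apply is_RInt_sum_n, HI]. }
  assert (Htail : is_lim_seq tail 0).
  { replace (Finite 0) with (Rbar_mult (b - a) (Series M - Series M)) by (simpl; f_equal; ring).
    apply is_lim_seq_scal_l, is_lim_seq_minus';
      [apply is_lim_seq_const | apply Series_correct, HM_ex]. }
  change (is_lim_seq (sum_n I) L).
  apply (is_lim_seq_le_le (fun N => L - tail N) _ (fun N => L + tail N)).
  - intros N. assert (H := Hbound N). apply Rabs_le_between in H. lra.
  - replace (Finite L) with (Finite (L - 0)) by (f_equal; ring).
    apply is_lim_seq_minus'; [apply is_lim_seq_const | exact Htail].
  - replace (Finite L) with (Finite (L + 0)) by (f_equal; ring).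
    apply is_lim_seq_plus'; [apply is_lim_seq_const | exact Htail].
Qed.

Lemma is_RInt_inv_add_sqr (m a b : R) : 0 < m ->
  is_RInt (fun u => / (m + u ^ 2)) a b ((atan (b / sqrt m) - atan (a / sqrt m)) / sqrt m).
Proof.
  intros Hm.
  assert (Hc : 0 < sqrt m) by (apply sqrt_lt_R0, Hm).
  assert (Hcc : sqrt m * sqrt m = m) by (apply sqrt_sqrt; lra).
  replace ((atan (b / sqrt m) - atan (a / sqrt m)) / sqrt m)
    with (atan (b / sqrt m) / sqrt m - atan (a / sqrt m) / sqrt m) by (field; lra).
  apply (is_RInt_derive (fun u => atan (u / sqrt m) / sqrt m)); intros u _.
  - auto_derive; [easy|]. set (c := sqrt m) in *. rewrite <- Hcc. field.
    assert (0 < c * c + u * u) by nra. split; nra.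
  - apply (ex_derive_continuous (K := R_AbsRing) (V := R_NormedModule)).
    auto_derive. nra.
Qed.

Lemma is_RInt_inv_sub_sqr (m a b : R) :
  (forall u, Rmin a b <= u <= Rmax a b -> u ^ 2 < m) ->
  is_RInt (fun u => / (m - u ^ 2)) a b
    ((ln ((sqrt m + b) / (sqrt m - b)) - ln ((sqrt m + a) / (sqrt m - a))) / (2 * sqrt m)).
Proof.
  intros Hm.
  assert (Hu : forall u, Rmin a b <= u <= Rmax a b -> - sqrt m < u < sqrt m).
  { intros u Hu. cut (Rabs u < sqrt m); [intros H; apply Rabs_def2 in H; lra|].
    rewrite <- sqrt_Rsqr_abs. apply sqrt_lt_1_alt.
    split; [apply Rle_0_sqr|]. rewrite Rsqr_pow2. apply Hm, Hu. }
  assert (Hm0 : 0 < m).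
  { assert (H := Hm a ltac:(split; [apply Rmin_l | apply Rmax_l])).
    assert (H2 := pow2_ge_0 a). lra. }
  assert (Hc : 0 < sqrt m) by (apply sqrt_lt_R0, Hm0).
  assert (Hcc : sqrt m * sqrt m = m) by (apply sqrt_sqrt; lra).
  replace ((ln ((sqrt m + b) / (sqrt m - b)) - ln ((sqrt m + a) / (sqrt m - a))) / (2 * sqrt m))
    with (ln ((sqrt m + b) / (sqrt m - b)) / (2 * sqrt m)
          - ln ((sqrt m + a) / (sqrt m - a)) / (2 * sqrt m)) by (field; lra).
  apply (is_RInt_derive (fun u => ln ((sqrt m + u) / (sqrt m - u)) / (2 * sqrt m)));
    intros u Hab; specialize (Hu u Hab).
  - auto_derive.
    + repeat split; try lra. apply Rdiv_lt_0_compat; lra.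
    + set (c := sqrt m) in *. rewrite <- Hcc. field. repeat split; try lra. nra.
  - apply (ex_derive_continuous (K := R_AbsRing) (V := R_NormedModule)).
    auto_derive. nra.
Qed.

(* Reduction formula, from [d/du (u / Q^n) = (1 - 2n) / Q^n + 2 n m / Q^(n+1)]
   for [Q u = m + σ u^2]. *)
Lemma is_RInt_inv_quad_pow_succ (m σ a b J : R) (n : nat) :
  m <> 0 -> (0 < n)%nat ->
  (forall u, Rmin a b <= u <= Rmax a b -> m + σ * u ^ 2 <> 0) ->
  is_RInt (fun u => / (m + σ * u ^ 2) ^ n) a b J ->
  is_RInt (fun u => / (m + σ * u ^ 2) ^ S n) a b
    ((b / (m + σ * b ^ 2) ^ n - a / (m + σ * a ^ 2) ^ n + (2 * INR n - 1) * J) / (2 * INR n * m)).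
Proof.
  intros Hm Hn HQ HI.
  assert (Hn' : 0 < INR n) by (apply lt_0_INR, Hn).
  assert (Hderiv : is_RInt
    (fun u => (1 - 2 * INR n) * / (m + σ * u ^ 2) ^ n + 2 * INR n * m * / (m + σ * u ^ 2) ^ S n) a b
    (b / (m + σ * b ^ 2) ^ n - a / (m + σ * a ^ 2) ^ n)).
  { apply (is_RInt_derive (fun u => u / (m + σ * u ^ 2) ^ n)); intros u Hu; specialize (HQ u Hu);
    assert (HQ' : forall t, t = m + σ * u ^ 2 -> t <> 0) by (intros t ->; exact HQ).
    - destruct n as [|p]; [lia|]. auto_derive.
      + apply Rmult_integral_contrapositive_currified; [|apply pow_nonzero]; apply HQ'; ring.
      + replace (match p with 0%nat => 1 | S _ => INR p + 1 end) with (INR p + 1)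
          by (destruct p; simpl; ring).
        rewrite S_INR. simpl pow. field. split; [apply pow_nonzero|]; apply HQ'; ring.
    - apply (ex_derive_continuous (K := R_AbsRing) (V := R_NormedModule)).
      auto_derive; repeat split;
      repeat (apply Rmult_integral_contrapositive_currified || apply pow_nonzero); apply HQ'; ring. }
  apply (is_RInt_ext (V := R_NormedModule) (fun u => / (2 * INR n * m) *
      (((1 - 2 * INR n) * / (m + σ * u ^ 2) ^ n + 2 * INR n * m * / (m + σ * u ^ 2) ^ S n)
       + (2 * INR n - 1) * / (m + σ * u ^ 2) ^ n))).
  { intros u Hu. assert (HQu : m + σ * u ^ 2 <> 0) by (apply HQ; lra).
    cbn -[pow INR]. field.
    repeat split; try apply pow_nonzero; first [assumption | apply Rgt_not_eq; lra]. }
  replace ((b / (m + σ * b ^ 2) ^ n - a / (m + σ * a ^ 2) ^ n + (2 * INR n - 1) * J)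
           / (2 * INR n * m))
    with (/ (2 * INR n * m) * ((b / (m + σ * b ^ 2) ^ n - a / (m + σ * a ^ 2) ^ n)
                               + (2 * INR n - 1) * J))
    by (unfold Rdiv; ring).
  apply (is_RInt_scal (V := R_NormedModule)), (is_RInt_plus (V := R_NormedModule)); [exact Hderiv|].
  apply (is_RInt_scal (V := R_NormedModule)). exact HI.
Qed.

Lemma is_RInt_inv_quad_pow_2_3 (m σ J : R) :
  0 < m -> (forall u, 0 <= u <= 1 -> 0 < m + σ * u ^ 2) ->
  is_RInt (fun u => / (m + σ * u ^ 2)) 0 1 J ->
  let J2 := (/ (m + σ) + J) / (2 * m) in
  is_RInt (fun u => / (m + σ * u ^ 2) ^ 2) 0 1 J2 /\
  is_RInt (fun u => / (m + σ * u ^ 2) ^ 3) 0 1 ((/ (m + σ) ^ 2 + 3 * J2) / (4 * m)).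
Proof.
  intros Hm HQ HJ J2.
  assert (HQ01 : forall u, Rmin 0 1 <= u <= Rmax 0 1 -> m + σ * u ^ 2 <> 0).
  { intros u Hu. rewrite Rmin_left, Rmax_right in Hu by lra. apply Rgt_not_eq, HQ, Hu. }
  assert (Hq : 0 < m + σ) by (replace (m + σ) with (m + σ * 1 ^ 2) by ring; apply HQ; lra).
  assert (HJ2 : is_RInt (fun u => / (m + σ * u ^ 2) ^ 2) 0 1 J2).
  { replace J2 with
      ((1 / (m + σ * 1 ^ 2) ^ 1 - 0 / (m + σ * 0 ^ 2) ^ 1 + (2 * INR 1 - 1) * J) / (2 * INR 1 * m))
      by (unfold J2; simpl; field; lra).
    apply is_RInt_inv_quad_pow_succ; [lra | lia | exact HQ01 |].
    apply (is_RInt_ext (V := R_NormedModule) (fun u => / (m + σ * u ^ 2))); [|exact HJ].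
    intros u _. cbn -[pow]. now rewrite pow_1. }
  split; [exact HJ2|].
  replace ((/ (m + σ) ^ 2 + 3 * J2) / (4 * m)) with
    ((1 / (m + σ * 1 ^ 2) ^ 2 - 0 / (m + σ * 0 ^ 2) ^ 2 + (2 * INR 2 - 1) * J2) / (2 * INR 2 * m))
    by (simpl; field; lra).
  apply is_RInt_inv_quad_pow_succ; [lra | lia | exact HQ01 | exact HJ2].
Qed.

Definition lin_term (a b s : R) (k : nat) : R :=
  (a * INR k + b) * (4 * INR k + 1) * s ^ (2 * k).

Definition pf_sum (a b s : R) : R :=
  (a / 4 - b / 2) * (/ (1 - s) + / (1 + s))
  + (b - 5 * a / 4) * (/ (1 - s) ^ 2 + / (1 + s) ^ 2)
  + a * (/ (1 - s) ^ 3 + / (1 + s) ^ 3).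

Lemma is_series_lin_term (a b s : R) : Rabs s < 1 -> is_series (lin_term a b s) (pf_sum a b s).
Proof.
  intros Hs. set (v := s ^ 2).
  assert (Hv : Rabs v < 1).
  { unfold v. rewrite <- RPow_abs. assert (H := Rabs_pos s). simpl. nra. }
  assert (Hs1 := Rabs_def2 _ _ Hs).
  apply (is_series_ext (fun k => 4 * a * (INR k ^ 2 * v ^ k)
                                 + ((a + 4 * b) * (INR k * v ^ k) + b * v ^ k))).
  { intros k. unfold lin_term, v. rewrite pow_mult. simpl. ring. }
  replace (pf_sum a b s)
    with (4 * a * (v * (1 + v) / (1 - v) ^ 3) + ((a + 4 * b) * (v / (1 - v) ^ 2) + b * / (1 - v))).
  - apply (is_series_plus (V := R_NormedModule));
      [| apply (is_series_plus (V := R_NormedModule))];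
      apply (is_series_scal_l (V := R_NormedModule)).
    + apply is_series_INR2_geom, Hv.
    + apply is_series_INR_geom, Hv.
    + apply is_series_geom, Hv.
  - unfold pf_sum, v.
    replace (1 - s ^ 2) with ((1 - s) * (1 + s)) by ring.
    field. lra.
Qed.

Lemma lin_term_abs_le (a b s r : R) (k : nat) :
  Rabs s <= r -> Rabs (lin_term a b s k) <= lin_term (Rabs a) (Rabs b) r k.
Proof.
  intros Hsr. unfold lin_term. assert (Hk := pos_INR k).
  rewrite !Rabs_mult, <- RPow_abs, (Rabs_right (4 * INR k + 1)) by lra.
  apply Rmult_le_compat.
  - apply Rmult_le_pos; [apply Rabs_pos | lra].
  - apply pow_le, Rabs_pos.
  - apply Rmult_le_compat_r; [lra|].
    eapply Rle_trans; [apply Rabs_triang|]. rewrite Rabs_mult, (Rabs_right (INR k)) by lra. lra.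
  - apply pow_incr. split; [apply Rabs_pos | exact Hsr].
Qed.

(* [JA] and [JB] stand for [∫_0^1 du / (4x - 1 + u^2)] and [∫_0^1 du / (4x + 1 - u^2)];
   the higher powers follow by the reduction formula. *)
Definition pf_integral (x a b JA JB : R) : R :=
  let JA2 := (/ (4 * x) + JA) / (2 * (4 * x - 1)) in
  let JB2 := (/ (4 * x) + JB) / (2 * (4 * x + 1)) in
  let JA3 := (/ (4 * x) ^ 2 + 3 * JA2) / (4 * (4 * x - 1)) in
  let JB3 := (/ (4 * x) ^ 2 + 3 * JB2) / (4 * (4 * x + 1)) in
  (a / 4 - b / 2) * (4 * x) * (JA + JB)
  + (b - 5 * a / 4) * (4 * x) ^ 2 * (JA2 + JB2)
  + a * (4 * x) ^ 3 * (JA3 + JB3).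

Lemma is_RInt_pf_sum (x a b : R) : 1 / 4 < x ->
  is_RInt (fun u => pf_sum a b ((1 - u ^ 2) / (4 * x))) 0 1
    (pf_integral x a b
       (atan (1 / sqrt (4 * x - 1)) / sqrt (4 * x - 1))
       (ln ((sqrt (4 * x + 1) + 1) / (sqrt (4 * x + 1) - 1)) / (2 * sqrt (4 * x + 1)))).
Proof.
  intros Hx.
  set (JA := atan (1 / sqrt (4 * x - 1)) / sqrt (4 * x - 1)).
  set (JB := ln ((sqrt (4 * x + 1) + 1) / (sqrt (4 * x + 1) - 1)) / (2 * sqrt (4 * x + 1))).
  assert (HA : is_RInt (fun u => / (4 * x - 1 + 1 * u ^ 2)) 0 1 JA).
  { assert (H := is_RInt_inv_add_sqr (4 * x - 1) 0 1 ltac:(lra)).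
    replace (0 / sqrt (4 * x - 1)) with 0 in H by (unfold Rdiv; ring).
    rewrite atan_0, Rminus_0_r in H.
    apply (is_RInt_ext (V := R_NormedModule) (fun u => / (4 * x - 1 + u ^ 2)));
      [intros u _; cbn -[pow]; f_equal; ring | exact H]. }
  assert (HB : is_RInt (fun u => / (4 * x + 1 + -1 * u ^ 2)) 0 1 JB).
  { assert (H := is_RInt_inv_sub_sqr (4 * x + 1) 0 1).
    rewrite Rplus_0_r, Rminus_0_r, Rdiv_diag, ln_1, Rminus_0_r in H.
    2: { apply Rgt_not_eq, sqrt_lt_R0. lra. }
    apply (is_RInt_ext (V := R_NormedModule) (fun u => / (4 * x + 1 - u ^ 2)));
      [intros u _; cbn -[pow]; f_equal; ring|].
    apply H. intros u Hu. rewrite Rmin_left, Rmax_right in Hu by lra. nra. }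
  destruct (is_RInt_inv_quad_pow_2_3 (4 * x - 1) 1 JA ltac:(lra)
    ltac:(intros u Hu; pose proof (pow2_ge_0 u); lra) HA) as [HA2 HA3].
  destruct (is_RInt_inv_quad_pow_2_3 (4 * x + 1) (-1) JB ltac:(lra)
    ltac:(intros u Hu; assert (u ^ 2 <= 1) by (simpl; nra); lra) HB) as [HB2 HB3].
  replace (4 * x - 1 + 1) with (4 * x) in HA2, HA3 by ring.
  replace (4 * x + 1 + -1) with (4 * x) in HB2, HB3 by ring.
  apply (is_RInt_ext (V := R_NormedModule) (fun u =>
      (a / 4 - b / 2) * (4 * x) * (/ (4 * x - 1 + 1 * u ^ 2) + / (4 * x + 1 + -1 * u ^ 2))
      + (b - 5 * a / 4) * (4 * x) ^ 2
        * (/ (4 * x - 1 + 1 * u ^ 2) ^ 2 + / (4 * x + 1 + -1 * u ^ 2) ^ 2)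
      + a * (4 * x) ^ 3 * (/ (4 * x - 1 + 1 * u ^ 2) ^ 3 + / (4 * x + 1 + -1 * u ^ 2) ^ 3))).
  { intros u Hu. rewrite Rmin_left, Rmax_right in Hu by lra.
    assert (0 < 4 * x - 1 + u ^ 2) by nra. assert (0 < 4 * x + 1 - u ^ 2) by nra.
    cbn -[pow]. unfold pf_sum. field.
    repeat split; try lra; apply Rgt_not_eq; nra. }
  unfold pf_integral. cbv zeta.
  apply (is_RInt_plus (V := R_NormedModule)); [apply (is_RInt_plus (V := R_NormedModule))|];
    apply (is_RInt_scal (V := R_NormedModule)), (is_RInt_plus (V := R_NormedModule)); assumption.
Qed.

Lemma is_RInt_lin_term (x a b : R) (k : nat) : 0 < x ->
  is_RInt (fun u => lin_term a b ((1 - u ^ 2) / (4 * x)) k) 0 1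
    ((a * INR k + b) / (x ^ (2 * k) * binomR (4 * k) (2 * k))).
Proof.
  intros Hx.
  set (c := (a * INR k + b) * (4 * INR k + 1) / (4 * x) ^ (2 * k)).
  apply (is_RInt_ext (V := R_NormedModule) (fun u => c * (1 - u ^ 2) ^ (2 * k))).
  { intros u _. cbn -[pow INR Nat.mul]. unfold lin_term, c, Rdiv.
    rewrite (Rpow_mult_distr (1 - u ^ 2)), pow_inv. ring. }
  replace ((a * INR k + b) / (x ^ (2 * k) * binomR (4 * k) (2 * k))) with (c * wallis (2 * k)).
  { apply (is_RInt_scal (V := R_NormedModule)), is_RInt_wallis. }
  unfold c, wallis, binomR.
  replace (2 * (2 * k))%nat with (4 * k)%nat by lia.
  rewrite mult_INR, Rpow_mult_distr. simpl (INR 2).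
  assert (H := C_gt0 (4 * k) (2 * k)). assert (Hk := pos_INR k).
  assert (0 < x ^ (2 * k)) by (apply pow_lt; lra).
  assert (0 < 4 ^ (2 * k)) by (apply pow_lt; lra).
  field. repeat split; lra.
Qed.

Theorem is_series_lin_div_binom (x a b : R) : 1 / 4 < x ->
  is_series (fun k => (a * INR k + b) / (x ^ (2 * k) * binomR (4 * k) (2 * k)))
    (pf_integral x a b
       (atan (1 / sqrt (4 * x - 1)) / sqrt (4 * x - 1))
       (ln ((sqrt (4 * x + 1) + 1) / (sqrt (4 * x + 1) - 1)) / (2 * sqrt (4 * x + 1)))).
Proof.
  intros Hx.
  assert (Hs : forall u, 0 <= u <= 1 -> Rabs ((1 - u ^ 2) / (4 * x)) <= / (4 * x)).
  { intros u Hu. rewrite Rabs_right.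
    - unfold Rdiv. rewrite <- (Rmult_1_l (/ (4 * x))) at 2.
      apply Rmult_le_compat_r; [apply Rlt_le, Rinv_0_lt_compat; lra | pose proof (pow2_ge_0 u); lra].
    - apply Rle_ge, Rdiv_le_0_compat; [simpl; nra | lra]. }
  assert (Hr : 0 < / (4 * x) < 1).
  { split; [apply Rinv_0_lt_compat; lra|]. rewrite <- Rinv_1. apply Rinv_lt_contravar; lra. }
  apply (is_series_RInt_dominated (fun k u => lin_term a b ((1 - u ^ 2) / (4 * x)) k)
           (fun u => pf_sum a b ((1 - u ^ 2) / (4 * x))) _
           (lin_term (Rabs a) (Rabs b) (/ (4 * x))) 0 1); [lra | | | | | apply is_RInt_pf_sum, Hx].
  - intros k. apply is_RInt_lin_term. lra.
  - intros k u Hu. apply lin_term_abs_le, Hs, Hu.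
  - eexists. apply is_series_lin_term. rewrite Rabs_right; lra.
  - intros u Hu. apply is_series_lin_term. eapply Rle_lt_trans; [apply Hs, Hu | apply Hr].
Qed.

Lemma is_series_arccot_family (x : R) : 1 / 4 < x ->
  is_series (fun k : nat =>
      (2 * (4 * x + 1) * INR k - 2 * x + 1) / (x ^ (2 * k) * binomR (4 * k) (2 * k)))
    (8 * x ^ 2 / (4 * x - 1) ^ 2 *
       (3 / sqrt (4 * x - 1) * arccot (sqrt (4 * x - 1)) - 4 * x + 4)).
Proof.
  intros Hx.
  apply (is_series_ext (fun k => (2 * (4 * x + 1) * INR k + (- 2 * x + 1))
                                 / (x ^ (2 * k) * binomR (4 * k) (2 * k))));
    [intros k; f_equal; ring|].
  assert (Hc : 0 < sqrt (4 * x - 1)) by (apply sqrt_lt_R0; lra).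
  assert (Hd : 0 < sqrt (4 * x + 1)) by (apply sqrt_lt_R0; lra).
  replace (8 * x ^ 2 / (4 * x - 1) ^ 2 *
       (3 / sqrt (4 * x - 1) * arccot (sqrt (4 * x - 1)) - 4 * x + 4))
    with (pf_integral x (2 * (4 * x + 1)) (- 2 * x + 1)
       (atan (1 / sqrt (4 * x - 1)) / sqrt (4 * x - 1))
       (ln ((sqrt (4 * x + 1) + 1) / (sqrt (4 * x + 1) - 1)) / (2 * sqrt (4 * x + 1)))).
  - apply is_series_lin_div_binom, Hx.
  - unfold pf_integral, arccot. cbv zeta. field. repeat split; lra.
Qed.

Lemma is_series_Rfun_family (x : R) : 1 / 4 < x ->
  is_series (fun k : nat =>
      (2 * (4 * x - 1) * INR k - 2 * x - 1) / (x ^ (2 * k) * binomR (4 * k) (2 * k)))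
    (8 * x ^ 2 / (4 * x + 1) ^ 2 * (3 * Rfun (4 * x + 1) / (4 * x + 1) - 4 * x - 4)).
Proof.
  intros Hx.
  apply (is_series_ext (fun k => (2 * (4 * x - 1) * INR k + (- 2 * x - 1))
                                 / (x ^ (2 * k) * binomR (4 * k) (2 * k))));
    [intros k; f_equal; ring|].
  replace (8 * x ^ 2 / (4 * x + 1) ^ 2 * (3 * Rfun (4 * x + 1) / (4 * x + 1) - 4 * x - 4))
    with (pf_integral x (2 * (4 * x - 1)) (- 2 * x - 1)
       (atan (1 / sqrt (4 * x - 1)) / sqrt (4 * x - 1))
       (ln ((sqrt (4 * x + 1) + 1) / (sqrt (4 * x + 1) - 1)) / (2 * sqrt (4 * x + 1)))).
  { apply is_series_lin_div_binom, Hx. }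
  unfold pf_integral, Rfun. cbv zeta.
  destruct (Rlt_dec 1 (4 * x + 1)) as [_ | H]; [| lra].
  assert (Hc : 0 < sqrt (4 * x - 1)) by (apply sqrt_lt_R0; lra).
  assert (Hd : 0 < sqrt (4 * x + 1)) by (apply sqrt_lt_R0; lra).
  assert (Hdd : sqrt (4 * x + 1) * sqrt (4 * x + 1) = 4 * x + 1) by (apply sqrt_sqrt; lra).
  set (d := sqrt (4 * x + 1)) in *.
  set (A := atan (1 / sqrt (4 * x - 1)) / sqrt (4 * x - 1)).
  set (L := ln ((d + 1) / (d - 1))).
  clearbody d A L.
  replace x with ((d * d - 1) / 4) by lra.
  field. repeat split; nra.
Qed.

Lemma atan_inv_sqrt3 : atan (1 / sqrt 3) = PI / 6.
Proof. rewrite <- tan_PI6. apply atan_tan. pose proof PI_RGT_0. lra. Qed.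

Lemma atan_sqrt3 : atan (sqrt 3) = PI / 3.
Proof. rewrite <- tan_PI3. apply atan_tan. pose proof PI_RGT_0. lra. Qed.

Lemma is_series_10k_sub_1 :
  is_series (fun k : nat => (10 * INR k - 1) / binomR (4 * k) (2 * k)) (4 * sqrt 3 / 27 * PI).
Proof.
  assert (Hs : 0 < sqrt 3) by (apply sqrt_lt_R0; lra).
  assert (Hss : sqrt 3 * sqrt 3 = 3) by (apply sqrt_sqrt; lra).
  replace (4 * sqrt 3 / 27 * PI)
    with (8 * 1 ^ 2 / (4 * 1 - 1) ^ 2 *
          (3 / sqrt (4 * 1 - 1) * arccot (sqrt (4 * 1 - 1)) - 4 * 1 + 4)).
  - refine (is_series_ext _ _ _ (fun k => _) (is_series_arccot_family 1 ltac:(lra))).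
    rewrite pow1, Rmult_1_l. f_equal. ring.
  - replace (4 * 1 - 1) with 3 by ring. unfold arccot. rewrite atan_inv_sqrt3.
    set (s := sqrt 3) in *. clearbody s.
    replace (3 / s) with s by (rewrite <- Hss; field; lra). field.
Qed.

Lemma is_series_k_4k :
  is_series (fun k : nat => INR k * 4 ^ k / binomR (4 * k) (2 * k)) ((3 * PI + 8) / 12).
Proof.
  replace ((3 * PI + 8) / 12) with (/ 6 * (8 * (1 / 2) ^ 2 / (4 * (1 / 2) - 1) ^ 2 *
    (3 / sqrt (4 * (1 / 2) - 1) * arccot (sqrt (4 * (1 / 2) - 1)) - 4 * (1 / 2) + 4))).
  - refine (is_series_ext _ _ _ (fun k => _)
      (is_series_scal_l (V := R_NormedModule) (/ 6) _ _ (is_series_arccot_family (1 / 2) ltac:(lra)))).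
    rewrite pow_mult. replace ((1 / 2) ^ 2) with (/ 4) by field. rewrite pow_inv.
    assert (0 < 4 ^ k) by (apply pow_lt; lra). assert (Hc := C_gt0 (4 * k) (2 * k)).
    unfold binomR. cbn -[pow INR Nat.mul Binomial.C]. field. split; lra.
  - replace (4 * (1 / 2) - 1) with 1 by field. rewrite sqrt_1. unfold arccot.
    replace (1 / 1) with 1 by field. rewrite atan_1. field.
Qed.

Lemma is_series_14k_add_1_9k :
  is_series (fun k : nat => (14 * INR k + 1) * 9 ^ k / binomR (4 * k) (2 * k))
    (24 * PI * sqrt 3 + 64).
Proof.
  assert (Hs : 0 < sqrt 3) by (apply sqrt_lt_R0; lra).
  replace (24 * PI * sqrt 3 + 64) with (3 * (8 * (1 / 3) ^ 2 / (4 * (1 / 3) - 1) ^ 2 *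
    (3 / sqrt (4 * (1 / 3) - 1) * arccot (sqrt (4 * (1 / 3) - 1)) - 4 * (1 / 3) + 4))).
  - refine (is_series_ext _ _ _ (fun k => _)
      (is_series_scal_l (V := R_NormedModule) 3 _ _ (is_series_arccot_family (1 / 3) ltac:(lra)))).
    rewrite pow_mult. replace ((1 / 3) ^ 2) with (/ 9) by field. rewrite pow_inv.
    assert (0 < 9 ^ k) by (apply pow_lt; lra). assert (Hc := C_gt0 (4 * k) (2 * k)).
    unfold binomR. cbn -[pow INR Nat.mul Binomial.C]. field. split; lra.
  - replace (4 * (1 / 3) - 1) with (/ 3) by field. rewrite sqrt_inv. unfold arccot.
    replace (1 / / sqrt 3) with (sqrt 3) by (field; lra). rewrite atan_sqrt3.
    field. lra.
Qed.

Lemma is_series_22k_sub_1_9k_4k :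
  is_series (fun k : nat => (22 * INR k - 1) * 9 ^ k / (4 ^ k * binomR (4 * k) (2 * k)))
    (32 / 25 * (4 + 27 / sqrt 15 * atan (sqrt (3 / 5)))).
Proof.
  assert (Hq : 0 < sqrt (5 / 3)) by (apply sqrt_lt_R0; lra).
  replace (32 / 25 * (4 + 27 / sqrt 15 * atan (sqrt (3 / 5)))) with
    (3 * (8 * (2 / 3) ^ 2 / (4 * (2 / 3) - 1) ^ 2 *
      (3 / sqrt (4 * (2 / 3) - 1) * arccot (sqrt (4 * (2 / 3) - 1)) - 4 * (2 / 3) + 4))).
  - refine (is_series_ext _ _ _ (fun k => _)
      (is_series_scal_l (V := R_NormedModule) 3 _ _ (is_series_arccot_family (2 / 3) ltac:(lra)))).
    rewrite pow_mult. replace ((2 / 3) ^ 2) with (4 * / 9) by field.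
    rewrite Rpow_mult_distr, pow_inv.
    assert (0 < 9 ^ k) by (apply pow_lt; lra). assert (0 < 4 ^ k) by (apply pow_lt; lra).
    assert (Hc := C_gt0 (4 * k) (2 * k)).
    unfold binomR. cbn -[pow INR Nat.mul Binomial.C]. field. repeat split; lra.
  - replace (4 * (2 / 3) - 1) with (5 / 3) by field. unfold arccot.
    replace (3 / 5) with (/ (5 / 3)) by field. rewrite sqrt_inv.
    replace (1 / sqrt (5 / 3)) with (/ sqrt (5 / 3)) by (field; lra).
    replace 15 with (3 * 3 * (5 / 3)) by field.
    rewrite sqrt_mult, sqrt_square by lra.
    field. lra.
Qed.

Lemma is_series_14k_sub_5_4k :
  is_series (fun k : nat => (14 * INR k - 5) / (4 ^ k * binomR (4 * k) (2 * k)))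
    (16 / 81 * (ln 2 - 24)).
Proof.
  replace (16 / 81 * (ln 2 - 24)) with
    (8 * 2 ^ 2 / (4 * 2 + 1) ^ 2 * (3 * Rfun (4 * 2 + 1) / (4 * 2 + 1) - 4 * 2 - 4)).
  - refine (is_series_ext _ _ _ (fun k => _) (is_series_Rfun_family 2 ltac:(lra))).
    rewrite pow_mult. replace (2 ^ 2) with 4 by ring. f_equal. ring.
  - replace (4 * 2 + 1) with 9 by ring. unfold Rfun.
    destruct (Rlt_dec 1 9) as [_ | H]; [| lra].
    replace 9 with (3 * 3) by ring. rewrite sqrt_square by lra.
    replace ((3 + 1) / (3 - 1)) with 2 by field.
    field.
Qed.

Theorem theorem1p2 :
  (forall x : R, 1 / 4 < x ->
     is_series (fun k : nat =>
        (2 * (4 * x + 1) * INR k - 2 * x + 1) / (x ^ (2 * k) * binomR (4 * k) (2 * k)))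
       (8 * x ^ 2 / (4 * x - 1) ^ 2 *
          (3 / sqrt (4 * x - 1) * arccot (sqrt (4 * x - 1)) - 4 * x + 4))
     /\
     is_series (fun k : nat =>
        (2 * (4 * x - 1) * INR k - 2 * x - 1) / (x ^ (2 * k) * binomR (4 * k) (2 * k)))
       (8 * x ^ 2 / (4 * x + 1) ^ 2 *
          (3 * Rfun (4 * x + 1) / (4 * x + 1) - 4 * x - 4)))
  /\ is_series (fun k : nat => (10 * INR k - 1) / binomR (4 * k) (2 * k))
       (4 * sqrt 3 / 27 * PI)
  /\ is_series (fun k : nat => INR k * 4 ^ k / binomR (4 * k) (2 * k))
       ((3 * PI + 8) / 12)
  /\ is_series (fun k : nat => (14 * INR k + 1) * 9 ^ k / binomR (4 * k) (2 * k))
       (24 * PI * sqrt 3 + 64)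
  /\ is_series (fun k : nat => (22 * INR k - 1) * 9 ^ k / (4 ^ k * binomR (4 * k) (2 * k)))
       (32 / 25 * (4 + 27 / sqrt 15 * atan (sqrt (3 / 5))))
  /\ is_series (fun k : nat => (14 * INR k - 5) / (4 ^ k * binomR (4 * k) (2 * k)))
       (16 / 81 * (ln 2 - 24)).
Proof.
  split.
  { intros x Hx. split; [apply is_series_arccot_family | apply is_series_Rfun_family]; exact Hx. }
  repeat split.
  - exact is_series_10k_sub_1.
  - exact is_series_k_4k.
  - exact is_series_14k_add_1_9k.
  - exact is_series_22k_sub_1_9k_4k.
  - exact is_series_14k_sub_5_4k.
Qed.
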